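(* Let $R$ be a commutative ring, $m\ge 1$, $A=(a_{ij})\in R^{m\times m}$, $b\in R^m$ and $x=(x_1,\dots,x_m)$. Let $L\in R^{(m+1)\times(m+1)}$ be the matrix with $L_{ij}=a_{ij}$ for $i,j\le m$, $L_{i,m+1}=b_i$ for $i\le m$, $L_{m+1,j}=-\sum_{k=1}^m a_{kj}$ for $j\le m$, and $L_{m+1,m+1}=-\sum_{k=1}^m b_k$. Let $\mathcal{G}$ be a labeled multidigraph (without self-loops, node set $\{1,\dots,m+1\}$) with Laplacian $L$. Then $\det(A)=(-1)^m\Upsilon_\mathcal{G}(m+1)$. Further, if $\det(A)\neq 0$, then the solution to the linear system $Ax+b=0$ is \[x_i=\frac{\Upsilon_\mathcal{G}(i)}{\Upsilon_\mathcal{G}(m+1)}\in\widehat{R},\qquad i=1,\dots,m,\] where $\widehat{R}\supseteq R$ is an extension ring of $R$ in which these quotients are defined.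
   Context: A multidigraph $\mathcal{G}=(\mathcal{N},\mathcal{E})$ consists of finite sets of nodes $\mathcal{N}$ and edges $\mathcal{E}$ with source and target maps $s,t\colon\mathcal{E}\to\mathcal{N}$ (parallel edges allowed); here there are no self-loops and $\mathcal{N}=\{1,\dots,m+1\}$. A labeling is a map $\pi\colon\mathcal{E}\to R$, extended to subsets by $\pi(\mathcal{E}')=\prod_{e\in\mathcal{E}'}\pi(e)$. A tree is a subgraph whose underlying undirected graph is connected and acyclic; it is rooted at a node $N$ if $N$ is its only node without outgoing edges. A spanning tree has node set $\mathcal{N}$ and is identified with its edge set. For $j\in\mathcal{N}$, $\Theta_\mathcal{G}(j)$ is the set of spanning trees of $\mathcal{G}$ rooted at $j$ and $\Upsilon_\mathcal{G}(j)=\sum_{\tau\in\Theta_\mathcal{G}(j)}\pi(\tau)$ (zero if the set is empty). The Laplacian of $\mathcal{G}$ is the $(m+1)\times(m+1)$ matrix with $L_{ij}=\sum_{e:\,s(e)=j,\,t(e)=i}\pi(e)$ for $i\ne j$ and $L_{ii}=-\sum_{k\ne i}L_{ki}$. *)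

From HB Require Import structures.
From mathcomp Require Import all_boot all_order all_algebra.
From Stdlib Require Import ClassicalEpsilon.
Set Implicit Arguments.
Unset Strict Implicit.
Unset Printing Implicit Defensive.
Import GRing.Theory.
Local Open Scope ring_scope.

Definition classicb (P : Prop) : bool :=
  if excluded_middle_informative P then true else false.

(* A multidigraph with node set 'I_n, finite edge type E and
   source / target maps s, t (parallel edges allowed). *)
Section Graph.
Variables (n : nat) (E : finType) (s t : E -> 'I_n).

Definition joins (e : E) (u v : 'I_n) : bool :=
  ((s e == u) && (t e == v)) || ((s e == v) && (t e == u)).

Definition uadj (T : {set E}) : rel 'I_n :=
  fun u v => [exists e in T, joins e u v].

Definition uconnected (T : {set E}) : bool :=
  [forall u, forall v, connect (uadj T) u v].

(* an (undirected) cycle in T: distinct edges e_1..e_k (k >= 1) and distinct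
   nodes v_0..v_{k-1} such that e_i joins v_{i-1} and v_i (indices mod k). *)
Definition has_cycle (T : {set E}) : Prop :=
  exists (es : seq E) (vs : seq 'I_n),
    [/\ (0 < size es)%N, size vs = size es, uniq es & uniq vs] /\
    {subset es <= T} /\
        all (fun p => joins p.1 p.2.1 p.2.2) (zip es (zip vs (rot 1 vs))).

Definition uacyclic (T : {set E}) : Prop := ~ has_cycle T.

Definition rooted_at (T : {set E}) (j : 'I_n) : bool :=
  [forall u, (u == j) == [forall e in T, s e != u]].

Definition spanning_tree_rooted (T : {set E}) (j : 'I_n) : Prop :=
  [/\ uconnected T, uacyclic T & rooted_at T j].

Variables (R : comPzRingType) (pi : E -> R).

Definition Upsilon (j : 'I_n) : R :=
  \sum_(T : {set E} | classicb (spanning_tree_rooted T j)) \prod_(e in T) pi e.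

Definition lap_offdiag (i j : 'I_n) : R :=
  \sum_(e : E | (s e == j) && (t e == i)) pi e.

Definition laplacian : 'M[R]_n :=
  \matrix_(i, j) (if i == j then - \sum_(k | k != i) lap_offdiag k i
                  else lap_offdiag i j).

End Graph.

(* The (m+1)x(m+1) matrix built from A and b; node m+1 is ord_max,
   node i <= m is lift ord_max (i-1). *)
Definition Lmat (R : comPzRingType) (m : nat) (A : 'M[R]_m) (b : 'cV[R]_m)
  : 'M[R]_m.+1 :=
  \matrix_(i, j)
    match unlift ord_max i, unlift ord_max j with
    | Some i', Some j' => A i' j'
    | Some i', None => b i' 0
    | None, Some j' => - \sum_(k < m) A k j'
    | None, None => - \sum_(k < m) b k 0
    end.

(* A spanning tree rooted at r is the same thing as a choice phi of one edge
   out of every node j <> r such that following the chosen edges from any node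
   leads to r. Column j of the Laplacian is a sum over the edges out of j, so
   expanding the determinant of the reduced Laplacian (row and column r
   deleted) multilinearly gives, up to the sign (-1)^m, the sum over all
   choices phi of prod pi(phi j) * det (1 - P_phi), where P_phi is the 0/1
   matrix of the map "follow the chosen edge". That determinant is 1 when phi
   leads to r (a non-identity permutation term would need a cycle of P_phi
   avoiding r) and 0 otherwise (the indicator of the nodes that never reach r
   lies in its kernel).
   Since the columns of L sum to zero, its cofactors are constant along each
   column, so L times the column of diagonal cofactors (-1)^m Upsilon(j) is
   the diagonal of L adj(L) = det(L) I = 0; the first m rows of this identity
   read A u + Upsilon(m+1) b = 0 with u_i = Upsilon(i). *)

From HB Require Import structures.
From mathcomp Require Import all_boot all_order all_algebra fingroup perm.
From Stdlib Require Import ClassicalEpsilon.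
Set Implicit Arguments.
Unset Strict Implicit.
Unset Printing Implicit Defensive.
Import GRing.Theory.
Local Open Scope ring_scope.

Lemma classicbP (P : Prop) : reflect P (classicb P).
Proof. by rewrite /classicb; case: excluded_middle_informative => p; constructor. Qed.

Section UndirectedCycles.
Variables (n : nat) (E : finType) (s t : E -> 'I_n).

Lemma uadj_sym (T : {set E}) : symmetric (uadj s t T).
Proof.
by move=> u v; apply/existsP/existsP => -[e Te]; exists e; rewrite /joins orbC.
Qed.

Lemma joins_ends e u v : joins s t e u v -> (s e \in [:: u; v]) && (t e \in [:: u; v]).
Proof. by case/orP => /andP[/eqP-> /eqP->]; rewrite !inE !eqxx ?orbT. Qed.

Lemma cycle_ends (es : seq E) (vs : seq 'I_n) :
  size vs = size es ->
  all (fun p => joins s t p.1 p.2.1 p.2.2) (zip es (zip vs (rot 1 vs))) ->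
  forall e, e \in es -> (s e \in vs) && (t e \in vs).
Proof.
move=> size_vs cycle_joins e e_es.
have size_zvs : size (zip vs (rot 1 vs)) = size es by rewrite size_zip size_rot minnn.
have : e \in unzip1 (zip es (zip vs (rot 1 vs))) by rewrite unzip1_zip ?size_zvs.
case/mapP => -[f [u v]] p_in /= ->.
have uv_in : (u, v) \in zip vs (rot 1 vs).
  rewrite -(unzip2_zip (s := es) (t := zip vs (rot 1 vs))) ?size_zvs //.
  exact: (map_f snd p_in).
have uvs : u \in vs.
  rewrite -(unzip1_zip (s := vs) (t := rot 1 vs)) ?size_rot //.
  exact: (map_f fst uv_in).
have vvs : v \in vs.
  rewrite -(mem_rot 1) -(unzip2_zip (s := vs) (t := rot 1 vs)) ?size_rot //.
  exact: (map_f snd uv_in).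
have /joins_ends := allP cycle_joins _ p_in.
by rewrite !inE => /andP[/orP[]/eqP-> /orP[]/eqP->]; rewrite ?uvs ?vvs.
Qed.

Section PathEdges.
Variables (S : {set E}) (d : E).

Definition edge_between (x y : 'I_n) : E := odflt d [pick e in S | joins s t e x y].

Lemma edge_betweenP x y :
  uadj s t S x y -> (edge_between x y \in S) && joins s t (edge_between x y) x y.
Proof.
case/existsP=> e /andP[Se je]; rewrite /edge_between.
by case: pickP => [f /andP[-> ->] //|/(_ e)]; rewrite Se je.
Qed.

Fixpoint path_edges (x : 'I_n) (p : seq 'I_n) : seq E :=
  if p is y :: p' then edge_between x y :: path_edges y p' else [::].

Lemma size_path_edges x p : size (path_edges x p) = size p.
Proof. by elim: p x => //= y p IHp x; rewrite IHp. Qed.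

Lemma path_edges_sub x p : path (uadj s t S) x p -> {subset path_edges x p <= S}.
Proof.
elim: p x => //= y p IHp x /andP[/edge_betweenP/andP[Sxy _] /IHp sub] e.
by rewrite inE => /predU1P[->|/sub].
Qed.

Lemma path_edges_joins x p : path (uadj s t S) x p ->
  all (fun q => joins s t q.1 q.2.1 q.2.2) (zip (path_edges x p) (zip (belast x p) p)).
Proof.
by elim: p x => //= y p IHp x /andP[/edge_betweenP/andP[_ ->] /IHp].
Qed.

Lemma path_edges_ends x p : path (uadj s t S) x p ->
  forall e, e \in path_edges x p -> (s e \in x :: p) && (t e \in x :: p).
Proof.
elim: p x => //= y p IHp x /andP[/edge_betweenP/andP[_ /joins_ends]] ends /IHp sub e.
rewrite inE => /predU1P[->|/sub/andP[sy ty]].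
  by case/andP: ends; rewrite !inE => /orP[]/eqP-> /orP[]/eqP->; rewrite !eqxx ?orbT.
by rewrite !(in_cons x) sy ty !orbT.
Qed.

Lemma path_edges_uniq x p :
  path (uadj s t S) x p -> uniq (x :: p) -> uniq (path_edges x p).
Proof.
elim: p x => //= y p IHp x /andP[xy_adj p_path] /andP[x_notin uniq_yp].
rewrite IHp // andbT; apply/negP => /(path_edges_ends p_path)/andP[sy ty].
have /andP[_ xy_joins] := edge_betweenP xy_adj.
have [x_eq|x_eq] : s (edge_between x y) = x \/ t (edge_between x y) = x.
  by case/orP: xy_joins => /andP[/eqP-> /eqP->]; [left|right].
- by rewrite -x_eq sy in x_notin.
- by rewrite -x_eq ty in x_notin.
Qed.

End PathEdges.

Lemma uconnected_subset_has_cycle (S T : {set E}) e :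
  S \subset T -> uconnected s t S -> e \in T -> e \notin S -> has_cycle s t T.
Proof.
move=> subST connS Te eNS.
have /connectP[p p_path] := forallP (forallP connS (s e)) (t e).
case: (shortenP p_path) => q q_path uniq_q _ lastq.
exists (rcons (path_edges S e (s e) q) e), (s e :: q).
have Sq := path_edges_sub q_path.
split; [split|split].
- by rewrite size_rcons.
- by rewrite size_rcons size_path_edges.
- rewrite rcons_uniq path_edges_uniq // andbT.
  by apply: contra eNS => /Sq.
- exact: uniq_q.
- by move=> f; rewrite mem_rcons inE => /predU1P[->//|/Sq/(subsetP subST)].
rewrite rot1_cons [s e :: q]lastI zip_rcons ?size_belast //.
rewrite zip_rcons; last by rewrite size_zip size_belast minnn size_path_edges.
by rewrite all_rcons path_edges_joins // andbT /= -lastq /joins !eqxx orbT.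
Qed.

End UndirectedCycles.

Lemma iter_cycle_in_orbit (T : finType) (f : T -> T) x :
  exists i p, let y := iter i f x in
    [/\ (0 < p)%N, uniq (traject f y p) & iter p f y = y].
Proof.
have /trajectP[i lt_i_order iter_order] := looping_order f x.
set o := fingraph.order f x in lt_i_order iter_order; set p := (o - i)%N.
have o_split : o = (i + p)%N by rewrite subnKC // ltnW.
exists i, p; split.
- by rewrite subn_gt0.
- have := fingraph.orbit_uniq f x.
  by rewrite /fingraph.orbit -/o o_split trajectD cat_uniq => /and3P[].
- by rewrite -iterD addnC -o_split.
Qed.

Lemma map_traject (T : Type) (f : T -> T) x n :
  map f (traject f x n) = traject f (f x) n.
Proof. by elim: n x => //= n IHn x; rewrite IHn. Qed.

Lemma rot1_traject_cycle (T : Type) (f : T -> T) x n :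
  iter n f x = x -> rot 1 (traject f x n) = map f (traject f x n).
Proof.
case: n => // n iter_n.
by rewrite [in LHS]trajectS rot1_cons map_traject trajectSr -iterSr iter_n.
Qed.

Section RootwardChoices.
Variables (m : nat) (E : finType) (s t : E -> 'I_m.+1) (r : 'I_m.+1).
Implicit Types (phi psi : {ffun 'I_m -> E}) (T : {set E}).

(* Node lift r j is the j-th non-root node; phi j is the edge chosen out of it. *)
Definition step phi (x : 'I_m.+1) : 'I_m.+1 :=
  if unlift r x is Some j then t (phi j) else r.

Definition out_choice phi : bool :=
  [forall j, s (phi j) == lift r j].

Definition rootward phi : bool :=
  [forall j, fconnect (step phi) (lift r j) r].

Definition edge_set phi : {set E} := [set phi j | j : 'I_m].

Lemma out_choiceP phi : reflect (forall j, s (phi j) = lift r j) (out_choice phi).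
Proof. by apply: (iffP forallP) => choice_phi j; apply/eqP; apply: choice_phi. Qed.

Lemma step_lift phi j : step phi (lift r j) = t (phi j).
Proof. by rewrite /step liftK. Qed.

Lemma step_root phi : step phi r = r.
Proof. by rewrite /step unlift_none. Qed.

Lemma fconnect_step_root phi x :
  fconnect (step phi) (step phi x) r = fconnect (step phi) x r.
Proof.
by rewrite [RHS]fconnect_eqVf; have [->|//] := eqVneq x r; rewrite step_root connect0.
Qed.

Lemma out_choice_inj phi : out_choice phi -> injective phi.
Proof.
by move=> /out_choiceP choice_phi i j /(congr1 s); rewrite !choice_phi => /lift_inj.
Qed.

Lemma edge_set_inj phi psi :
  out_choice phi -> out_choice psi -> edge_set phi = edge_set psi -> phi = psi.
Proof.
move=> /out_choiceP choice_phi /out_choiceP choice_psi same_edges; apply/ffunP => j.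
have /imsetP[k _ phi_j] : phi j \in edge_set psi by rewrite -same_edges imset_f.
have := congr1 s phi_j; rewrite choice_phi choice_psi => /lift_inj jk.
by rewrite phi_j jk.
Qed.

Lemma edge_set_rooted_at phi : out_choice phi -> rooted_at s (edge_set phi) r.
Proof.
move=> /out_choiceP choice_phi; apply/forallP => u.
have [j ->|->] := unliftP r u.
- rewrite [lift r j == r]eq_sym (negbTE (neq_lift r j)) eq_sym eqbF_neg negb_forall_in.
  by apply/existsP; exists (phi j); rewrite imset_f //= choice_phi eqxx.
- rewrite eqxx eq_sym eqb_id; apply/forall_inP => e /imsetP[j _ ->].
  by rewrite choice_phi eq_sym neq_lift.
Qed.

Lemma edge_set_uconnected phi :
  out_choice phi -> rootward phi -> uconnected s t (edge_set phi).
Proof.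
move=> /out_choiceP choice_phi /forallP to_root.
set adj := uadj s t (edge_set phi).
have step_adj : subrel (frel (step phi)) (connect adj).
  move=> x y /eqP <-; have [j ->|->] := unliftP r x; last by rewrite step_root connect0.
  apply/connect1/existsP; exists (phi j).
  by rewrite imset_f //= step_lift /joins choice_phi !eqxx.
have connect_root x : connect adj x r.
  have [j ->|->] := unliftP r x; last exact: connect0.
  exact: connect_sub step_adj _ _ (to_root j).
apply/forallP => u; apply/forallP => v; apply: connect_trans (connect_root u) _.
by rewrite (sym_connect_sym (@uadj_sym _ _ s t _)) connect_root.
Qed.

Lemma edge_set_uacyclic phi :
  out_choice phi -> rootward phi -> uacyclic s t (edge_set phi).
Proof.
move=> /out_choiceP choice_phi /forallP to_root.
case=> es [vs [[es_gt0 size_vs uniq_es uniq_vs] [es_sub cycle_joins]]].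
have ends := cycle_ends size_vs cycle_joins.
have sources_inj : {in es &, injective s}.
  move=> e1 e2 /es_sub/imsetP[j1 _ ->] /es_sub/imsetP[j2 _ ->].
  by rewrite !choice_phi => /lift_inj ->.
have [_ sources_vs] : (size (map s es) = size vs) * (map s es =i vs).
  apply: uniq_min_size.
  - by rewrite map_inj_in_uniq.
  - by move=> v /mapP[e /ends/andP[sv _] ->].
  - by rewrite size_map size_vs.
(* The sources of the cycle's edges are distinct, hence are all its nodes: the
   node set is closed under step and avoids r, so it never reaches r. *)
have vs_closed v : v \in vs -> (v != r) && (step phi v \in vs).
  rewrite -sources_vs => /mapP[e e_es ->].
  have /es_sub/imsetP[j _ e_phi] := e_es; have /andP[_ tv] := ends e e_es.
  by rewrite e_phi choice_phi step_lift eq_sym neq_lift -e_phi.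
case: vs size_vs {uniq_vs cycle_joins ends sources_vs} vs_closed => [|v vs].
  by move=> size_vs; rewrite -size_vs in es_gt0.
move=> _ vs_closed; have [j v_j|v_r] := unliftP r v; last first.
  by case/andP: (vs_closed v (mem_head v vs)); rewrite v_r eqxx.
have iter_in k : iter k (step phi) v \in v :: vs.
  by elim: k => [|k IHk] /=; [rewrite mem_head | case/andP: (vs_closed _ IHk)].
have := vs_closed _ (iter_in (findex (step phi) v r)).
by rewrite iter_findex ?v_j ?to_root ?eqxx.
Qed.

Lemma spanning_tree_edge_set phi :
  out_choice phi -> rootward phi -> spanning_tree_rooted s t (edge_set phi) r.
Proof.
move=> choice_phi rootward_phi; split.
- exact: edge_set_uconnected.
- exact: edge_set_uacyclic.
- exact: edge_set_rooted_at.
Qed.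

Lemma not_rootward_has_cycle T phi :
  out_choice phi -> (forall j, phi j \in T) -> ~~ rootward phi -> has_cycle s t T.
Proof.
move=> /out_choiceP choice_phi phi_T /forallPn[j not_root].
have [i [p]] := iter_cycle_in_orbit (step phi) (lift r j).
set y := iter i _ _; set vs := traject (step phi) y p; case=> p_gt0 uniq_vs iter_p.
have vs_nonroot v : v \in vs -> v != r.
  case/trajectP=> k _ ->; apply: contraNneq not_root => iter_root.
  by rewrite -[r in fconnect _ _ r]iter_root /y -iterD fconnect_iter.
pose F v := oapp phi (phi j) (unlift r v).
have F_joins v : v != r -> (s (F v) == v) && (t (F v) == step phi v).
  by have [k ->|->] := unliftP r v; rewrite ?eqxx // /F liftK /= choice_phi step_lift !eqxx.
exists (map F vs), vs; split; [split|split].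
- by rewrite size_map size_traject.
- by rewrite size_map.
- rewrite map_inj_in_uniq // => v1 v2 v1_in v2_in F_eq.
  have /andP[/eqP <- _] := F_joins _ (vs_nonroot _ v1_in).
  by have /andP[/eqP <- _] := F_joins _ (vs_nonroot _ v2_in); rewrite F_eq.
- exact: uniq_vs.
- by move=> f /mapP[v _ ->]; rewrite /F; case: unlift => /=.
rewrite rot1_traject_cycle // -[X in zip X (map _ _)]map_id !zip_map all_map.
apply/allP => v v_in /=.
have /andP[/eqP s_v /eqP t_v] := F_joins _ (vs_nonroot _ v_in).
by rewrite /joins s_v t_v !eqxx.
Qed.

Lemma spanning_tree_out_choice T :
  spanning_tree_rooted s t T r ->
  exists2 phi, out_choice phi && rootward phi & edge_set phi = T.
Proof.
case=> connT acyclicT /forallP rootedT.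
have out_edge j : exists e, (e \in T) && (s e == lift r j).
  have := rootedT (lift r j); rewrite [lift r j == r]eq_sym (negbTE (neq_lift r j)).
  rewrite eq_sym eqbF_neg negb_forall_in => /existsP[e /andP[Te /negPn se]].
  by exists e; rewrite Te se.
have [g g_out] := fin_all_exists out_edge.
pose phi := [ffun j => g j].
have phi_T j : phi j \in T by rewrite ffunE; case/andP: (g_out j).
have choice_phi : out_choice phi by apply/forallP => j; rewrite ffunE; case/andP: (g_out j).
have rootward_phi : rootward phi.
  by apply: contraT => /(not_rootward_has_cycle choice_phi phi_T).
exists phi; first by rewrite choice_phi.
have sub_phi : edge_set phi \subset T by apply/subsetP => e /imsetP[j _ ->].
apply/eqP; rewrite eqEsubset sub_phi; apply/subsetP => e Te; apply/negPn/negP => e_notin.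
exact/acyclicT/(uconnected_subset_has_cycle sub_phi _ Te e_notin)/edge_set_uconnected.
Qed.

Lemma Upsilon_out_choice (R : comPzRingType) (pi : E -> R) :
  Upsilon s t pi r =
  \sum_(phi | out_choice phi && rootward phi) \prod_j pi (phi j).
Proof.
have prod_edge_set phi :
    out_choice phi -> \prod_j pi (phi j) = \prod_(e in edge_set phi) pi e.
  by move=> /out_choice_inj phi_inj; rewrite big_imset // => i j _ _ /phi_inj.
pose P := [pred phi | out_choice phi && rootward phi].
transitivity (\sum_(phi in P) \prod_(e in edge_set phi) pi e); last first.
  by apply: eq_bigr => phi /andP[/prod_edge_set ->].
rewrite -(big_imset (fun T => \prod_(e in T) pi e) (h := edge_set)) /=; last first.
  by move=> phi psi /andP[choice_phi _] /andP[choice_psi _]; apply: edge_set_inj.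
apply: eq_bigl => T; apply/classicbP/imsetP.
- by case/spanning_tree_out_choice => phi P_phi <-; exists phi.
- by case=> phi /andP[choice_phi rootward_phi] ->; apply: spanning_tree_edge_set.
Qed.

End RootwardChoices.

Lemma det_scale_kernel (R : comPzRingType) n (A : 'M[R]_n) (w : 'cV[R]_n) :
  A *m w = 0 -> \det A *: w = 0.
Proof. by move=> Aw; rewrite -mul_scalar_mx -mul_adj_mx -mulmxA Aw mulmx0. Qed.

Section ReducedLaplacian.
Variables (m : nat) (E : finType) (s t : E -> 'I_m.+1) (r : 'I_m.+1).
Hypothesis noloop : forall e, s e != t e.
Variables (R : comPzRingType) (pi : E -> R).
Implicit Types phi : {ffun 'I_m -> E}.

Definition step_adj phi : 'M[R]_m := \matrix_(i, k) (t (phi i) == lift r k)%:R.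

Lemma step_of_perm_term phi (sg : 'S_m) :
  \prod_i (1%:M - step_adj phi) i (sg i) != 0 ->
  forall i, sg i != i -> step t r phi (lift r i) = lift r (sg i).
Proof.
move=> nz i moved; apply/eqP; apply: contraNT nz; rewrite step_lift => /negbTE no_edge.
by rewrite (bigD1 i) //= !mxE [i == _]eq_sym (negbTE moved) no_edge subrr mul0r.
Qed.

Lemma det_step_rootward phi :
  out_choice s r phi -> rootward t r phi -> \det (1%:M - step_adj phi) = 1.
Proof.
move=> /out_choiceP choice_phi /forallP to_root.
have diag i : (1%:M - step_adj phi) i i = 1.
  by rewrite !mxE eqxx -choice_phi eq_sym (negbTE (noloop _)) subr0.
have off_diag (sg : 'S_m) : sg != 1%g -> \prod_i (1%:M - step_adj phi) i (sg i) = 0.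
  move=> sg_ne1; apply/eqP/negPn/negP => /step_of_perm_term sg_step.
  have [i0 moved0] : exists i0, sg i0 != i0.
    apply/existsP; apply: contraNT sg_ne1 => /existsPn fixed.
    by apply/eqP/permP => i; rewrite perm1; apply/eqP/negPn/fixed.
  have moved_orbit k :
      exists2 i, sg i != i & iter k (step t r phi) (lift r i0) = lift r i.
    elim: k => [|k [i moved iter_k]]; first by exists i0.
    exists (sg i); first by rewrite (inj_eq perm_inj).
    by rewrite iterS iter_k sg_step.
  have [i _] := moved_orbit (findex (step t r phi) (lift r i0) r).
  by rewrite iter_findex ?to_root // => /eqP; rewrite (negbTE (neq_lift r i)).
rewrite /determinant (bigD1 (1%g : 'S_m)) //= odd_perm1 expr0 mul1r.
rewrite big1 => [|i _]; last by rewrite perm1 diag.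
by rewrite big1 ?addr0 // => sg /off_diag ->; rewrite mulr0.
Qed.

Lemma det_step_not_rootward phi : ~~ rootward t r phi -> \det (1%:M - step_adj phi) = 0.
Proof.
case/forallPn => j0 not_root.
pose w : 'cV[R]_m := \col_k (~~ fconnect (step t r phi) (lift r k) r)%:R.
have step_w : step_adj phi *m w = w.
  apply/matrixP => i z; rewrite [in RHS]mxE -fconnect_step_root step_lift !mxE.
  under eq_bigr do rewrite !mxE.
  have [k -> | ->] := unliftP r (t (phi i)).
  - rewrite (bigD1 k) //= eqxx mul1r big1 ?addr0 // => k' /negbTE.
    by rewrite (inj_eq lift_inj) eq_sym => ->; rewrite mul0r.
  - by rewrite connect0 big1 // => k _; rewrite (negbTE (neq_lift _ _)) mul0r.
have /matrixP/(_ j0 0) : \det (1%:M - step_adj phi) *: w = 0.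
  by apply: det_scale_kernel; rewrite mulmxBl mul1mx step_w subrr.
by rewrite !mxE (negbTE not_root) mulr1.
Qed.

Lemma reduced_laplacian_entry i k :
  (- row' r (col' r (laplacian s t pi)))^T i k =
  \sum_(e | s e == lift r i) pi e * ((i == k)%:R - (t e == lift r k)%:R).
Proof.
rewrite !mxE (inj_eq lift_inj) [k == i]eq_sym /lap_offdiag.
have [<- | ne_ik] := eqVneq i k.
- rewrite opprK (partition_big t (fun x => x != lift r i)) => [|e /eqP <-]; last first.
    by rewrite eq_sym noloop.
  apply: eq_bigr => x x_ne; apply: eq_bigr => e /andP[_ /eqP ->].
  by rewrite (negbTE x_ne) subr0 mulr1.
- rewrite big_mkcondr -sumrN; apply: eq_bigr => e _.
  by case: eqP => _; rewrite sub0r ?mulrN1 ?oppr0 ?mulr0.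
Qed.

Lemma det_neg_reduced_laplacian :
  \det (- row' r (col' r (laplacian s t pi))) =
  \sum_(phi | out_choice s r phi) \prod_j pi (phi j) * \det (1%:M - step_adj phi).
Proof.
pose F (sg : 'S_m) (i : 'I_m) e :=
  if s e == lift r i then pi e * ((i == sg i)%:R - (t e == lift r (sg i))%:R) else 0.
have expand_rows (sg : 'S_m) :
    \prod_i (- row' r (col' r (laplacian s t pi)))^T i (sg i) =
    \sum_(phi : {ffun 'I_m -> E}) \prod_i F sg i (phi i).
  rewrite -bigA_distr_bigA; apply: eq_bigr => i _.
  by rewrite reduced_laplacian_entry big_mkcond.
rewrite -det_tr /determinant.
under eq_bigr do rewrite expand_rows big_distrr.
rewrite exchange_big [RHS]big_mkcond; apply: eq_bigr => phi _ /=.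
case: ifPn => [/out_choiceP choice_phi | /forallPn[i not_out]].
- rewrite big_distrr; apply: eq_bigr => sg _ /=.
  rewrite mulrCA -big_split; congr (_ * _); apply: eq_bigr => i _ /=.
  by rewrite /F choice_phi eqxx !mxE.
- by rewrite big1 // => sg _; rewrite (bigD1 i) //= /F (negbTE not_out) mul0r mulr0.
Qed.

Theorem matrix_tree :
  \det (row' r (col' r (laplacian s t pi))) = (-1) ^+ m * Upsilon s t pi r.
Proof.
have det_opp : \det (- row' r (col' r (laplacian s t pi))) =
    (-1) ^+ m * \det (row' r (col' r (laplacian s t pi))).
  by rewrite -scaleN1r detZ.
rewrite -[LHS](signrMK m) -det_opp det_neg_reduced_laplacian Upsilon_out_choice.
congr (_ * _); rewrite (bigID (rootward t r)) /= [X in _ + X]big1 ?addr0.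
- apply: eq_bigr => phi /andP[choice_phi rootward_phi].
  by rewrite det_step_rootward ?mulr1.
- by move=> phi /andP[_ /det_step_not_rootward ->]; rewrite mulr0.
Qed.

End ReducedLaplacian.

Section ColumnSumZero.
Variables (R : comPzRingType) (n : nat).
Implicit Types (A L : 'M[R]_n).

Definition row_subst (j : 'I_n) (v : 'rV[R]_n) A : 'M[R]_n :=
  \matrix_(a, b) if a == j then v 0 b else A a b.

Lemma cofactor_row_subst A j v b : cofactor (row_subst j v A) j b = cofactor A j b.
Proof.
rewrite /cofactor; congr (_ * \det _).
by apply/matrixP => a c; rewrite !mxE eq_sym (negbTE (neq_lift j a)).
Qed.

Lemma det_row_subst A j v : \det (row_subst j v A) = \sum_b v 0 b * cofactor A j b.
Proof.
by rewrite (expand_det_row _ j); apply: eq_bigr => b _; rewrite cofactor_row_subst mxE eqxx.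
Qed.

Lemma cofactorE_row_subst A j k : cofactor A j k = \det (row_subst j (delta_mx 0 k) A).
Proof.
rewrite det_row_subst (bigD1 k) //= mxE !eqxx mul1r big1 ?addr0 // => b ne_bk.
by rewrite mxE (negbTE ne_bk) mul0r.
Qed.

Lemma det_xrow A j j' : j != j' -> \det (xrow j j' A) = - \det A.
Proof.
by move=> ne_jj'; rewrite xrowE det_mulmx det_perm odd_tperm ne_jj' expr1 mulN1r.
Qed.

(* Adding to row j' all rows of L but row j turns it into minus row j. *)
Lemma cofactor_col_const L :
  (forall k, \sum_i L i k = 0) -> forall j j' k, cofactor L j k = cofactor L j' k.
Proof.
move=> colsum0 j j' k; have [<- // | ne_jj'] := eqVneq j j'.
rewrite !cofactorE_row_subst; set N := row_subst j _ L.
have sum_rows : \sum_i \det (row_subst j' (row i L) N) = 0.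
  under eq_bigr do rewrite det_row_subst.
  rewrite exchange_big big1 // => b _; rewrite -mulr_suml.
  under eq_bigr do rewrite mxE.
  by rewrite colsum0 mul0r.
rewrite (bigD1 j') // (bigD1 j ne_jj') /= big1 ?addr0 in sum_rows; last first.
  move=> i /andP[ne_ij' ne_ij]; apply: (determinant_alternate ne_ij') => b.
  by rewrite !mxE !eqxx (negbTE ne_ij') (negbTE ne_ij).
have N_j' : row_subst j' (row j' L) N = N.
  apply/matrixP => a b; rewrite !mxE.
  by case: eqVneq => [-> | //]; rewrite eq_sym (negbTE ne_jj').
have swap : row_subst j' (row j L) N = xrow j j' (row_subst j' (delta_mx 0 k) L).
  apply/matrixP => a b; rewrite !mxE.
  case: tpermP => [-> | -> | /eqP ne_aj /eqP ne_aj'].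
  - by rewrite !eqxx (negbTE ne_jj').
  - by rewrite !eqxx (negbTE ne_jj').
  - by rewrite (negbTE ne_aj) (negbTE ne_aj').
move: sum_rows; rewrite N_j' swap det_xrow // => /eqP.
by rewrite addr_eq0 opprK => /eqP.
Qed.

End ColumnSumZero.

Lemma det_col_sum0 (R : comPzRingType) n (L : 'M[R]_n.+1) :
  (forall k, \sum_i L i k = 0) -> \det L = 0.
Proof.
move=> colsum0; rewrite (expand_det_col _ 0).
under eq_bigr do rewrite (cofactor_col_const colsum0 _ 0).
by rewrite -mulr_suml colsum0 mul0r.
Qed.

Lemma mulmx_diag_cofactor_col_sum0 (R : comPzRingType) n (L : 'M[R]_n.+1) :
  (forall k, \sum_i L i k = 0) -> L *m \col_k cofactor L k k = 0.
Proof.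
move=> colsum0; apply/colP => i.
have := mul_mx_adj L; rewrite det_col_sum0 // => /matrixP/(_ i i).
rewrite !mxE mul0rn => adj_ii; rewrite -[RHS]adj_ii.
by apply: eq_bigr => k _; rewrite !mxE (cofactor_col_const colsum0 i k k).
Qed.

Section LaplacianKernel.
Variables (m : nat) (E : finType) (s t : E -> 'I_m.+1).
Hypothesis noloop : forall e, s e != t e.
Variables (R : comPzRingType) (pi : E -> R).

Lemma laplacian_col_sum0 k : \sum_i laplacian s t pi i k = 0.
Proof.
rewrite (bigD1 k) //= mxE eqxx addrC; apply/eqP; rewrite subr_eq0; apply/eqP.
by apply: eq_bigr => i ne_ik; rewrite mxE (negbTE ne_ik).
Qed.

Lemma laplacian_mulmx_Upsilon : laplacian s t pi *m \col_k Upsilon s t pi k = 0.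
Proof.
have := mulmx_diag_cofactor_col_sum0 laplacian_col_sum0.
have -> : \col_k cofactor (laplacian s t pi) k k =
          (-1) ^+ m *: \col_k Upsilon s t pi k.
  apply/colP => k; rewrite !mxE /cofactor -signr_odd addnn odd_double expr0 mul1r.
  exact: matrix_tree.
by rewrite -scalemxAr => /(congr1 ( *:%R ((-1) ^+ m))); rewrite signrZK scaler0.
Qed.

End LaplacianKernel.

Section AffineSystems.
Variables (R : comUnitRingType) (n : nat).

Lemma affine_solution_scale p (A : 'M[R]_(n, p)) (b : 'cV[R]_n) (u : 'cV[R]_p) c :
  c \is a GRing.unit -> A *m u + c *: b = 0 -> A *m (c^-1 *: u) + b = 0.
Proof.
move=> unit_c sol; have -> : b = c^-1 *: (c *: b) by rewrite scalerA mulVr ?scale1r.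
by rewrite -scalemxAr -scalerDr sol scaler0.
Qed.

Lemma unitmx_affine_solution_unique (A : 'M[R]_n) (b x y : 'cV[R]_n) :
  A \in unitmx -> A *m x + b = 0 -> A *m y + b = 0 -> y = x.
Proof.
move=> unitA sol_x sol_y; apply: (can_inj (mulKmx unitA)); apply: (addIr b).
by rewrite sol_x sol_y.
Qed.

End AffineSystems.

Section BorderedMatrix.
Variables (R : comPzRingType) (m : nat) (A : 'M[R]_m) (b : 'cV[R]_m).

Lemma Lmat_minor : row' ord_max (col' ord_max (Lmat A b)) = A.
Proof. by apply/matrixP => i j; rewrite !mxE !liftK. Qed.

Lemma Lmat_kernel (u : 'I_m.+1 -> R) :
  Lmat A b *m \col_k u k = 0 -> A *m \col_i u (lift ord_max i) + u ord_max *: b = 0.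
Proof.
move=> /colP ker; apply/colP => i; have := ker (lift ord_max i).
rewrite !mxE (bigD1_ord ord_max) //= !mxE liftK unlift_none addrC mulrC => ker_i.
rewrite -[RHS]ker_i; congr (_ + _); apply: eq_bigr => k _.
by rewrite !mxE !liftK.
Qed.

End BorderedMatrix.

Theorem proposition2p2 (R : comPzRingType) (m : nat) (hm : (1 <= m)%N)
  (A : 'M[R]_m) (b : 'cV[R]_m)
  (E : finType) (s t : E -> 'I_m.+1) (pi : E -> R)
  (noloop : forall e, s e != t e)
  (hL : laplacian s t pi = Lmat A b) :
  \det A = (-1) ^+ m * Upsilon s t pi ord_max /\
  (\det A != 0 ->
   forall (S : comUnitRingType) (f : {rmorphism R -> S}),
     injective f ->
     f (Upsilon s t pi ord_max) \is a GRing.unit ->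
     let x : 'cV[S]_m :=
       \col_i (f (Upsilon s t pi (lift ord_max i)) / f (Upsilon s t pi ord_max)) in
     map_mx f A *m x + map_mx f b = 0 /\
     (forall y : 'cV[S]_m, map_mx f A *m y + map_mx f b = 0 -> y = x)).
Proof.
have detA : \det A = (-1) ^+ m * Upsilon s t pi ord_max.
  by rewrite -(Lmat_minor A b) -hL matrix_tree.
split=> // _ S f _ unit_root x.
have := laplacian_mulmx_Upsilon noloop pi; rewrite hL => /Lmat_kernel ker.
have sol : map_mx f A *m x + map_mx f b = 0.
  have -> : x = (f (Upsilon s t pi ord_max))^-1 *:
                map_mx f (\col_i Upsilon s t pi (lift ord_max i)).
    by apply/colP => i; rewrite !mxE mulrC.
  apply: affine_solution_scale unit_root _.
  by rewrite -map_mxM -map_mxZ -map_mxD ker map_mx0.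
split=> // y; apply: unitmx_affine_solution_unique sol.
by rewrite unitmxE det_map_mx detA rmorphM rmorph_sign unitrMl ?unitrX ?unitrN1.
Qed.
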